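(* Let $\mathcal T$ be a locally finite partial tessellation of ${\mathbb X}$, let $T_1,T_2$ be tiles of $\mathcal T$, and suppose $S=T_1\cap T_2$ has codimension 1. Let $H$ be the hyperplane generated by $S$. Then: (1) $H$ is an essential hyperplane of both $T_1$ and $T_2$; (2) $T_1$ and $T_2$ are contained in different closed half-spaces bounded by $H$; (3) $S^r\cap T=\emptyset$ for every tile $T$ different from $T_1$ and $T_2$; (4) $S$ is a side of $\mathcal T$.
   Context: ${\mathbb X}$ is $\mathbb R^n$, the unit sphere $\mathbb S^n$, or hyperbolic $n$-space. A subspace is a complete totally geodesic submanifold, a hyperplane one of codimension 1; closed half-spaces are closures of the two components of the complement of a hyperplane; the hyperplane generated by a set is the smallest subspace containing it (when that has codimension 1). A polyhedron is a nonempty intersection of a family of closed half-spaces whose boundary hyperplanes form a locally finite family; its codimension is that of the subspace it generates and $S^r$ is its interior in that subspace; it is thick if it has nonempty interior in ${\mathbb X}$. For a thick polyhedron $P$, a closed half-space $Z$ is essential if $P\subseteq Z$ and $P\cap\partial Z$ has nonempty interior in $\partial Z$; then $\partial Z$ is an essential hyperplane of $P$. A partial tessellation is a set of thick polyhedra (tiles) with pairwise disjoint interiors; locally finite means every compact set meets only finitely many tiles. A cell is a nonempty intersection $C$ of tiles such that for every tile $T$ either $C\subseteq T$ or $C^r\cap T=\emptyset$; a side is a cell of codimension 1. *)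

From HB Require Import structures.
From mathcomp Require Import all_boot all_order all_algebra.
From mathcomp Require Import all_classical all_reals all_analysis.
Set Implicit Arguments. Unset Strict Implicit. Unset Printing Implicit Defensive.
Import Order.TTheory GRing.Theory Num.Theory.
Import numFieldNormedType.Exports.
Local Open Scope classical_set_scope.
Local Open Scope ring_scope.

(* All are realised inside R^(n+1) (row vectors
   'rV[R]_(n.+1)), with the induced (Euclidean) topology, which is the
   manifold topology of X:
   - Euclidean n-space: the affine slice {x | x_n = 1};
   - the unit sphere S^n: {x | x_0^2 + ... + x_n^2 = 1};
   - hyperbolic n-space: the hyperboloid model
       {x | x_0^2 + ... + x_(n-1)^2 - x_n^2 = -1, x_n > 0}.
   In each model the (complete totally geodesic) subspaces are exactly the
   nonempty sets X /\ W with W a linear subspace of R^(n+1), of dimension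
   dim W - 1. *)
Inductive geometry := Euclidean | Spherical | Hyperbolic.

Section Geometry.
Variables (R : realType) (g : geometry) (n : nat).

Local Notation point := 'rV[R]_(n.+1).

Definition Xset : set point :=
  match g with
  | Euclidean => [set x | x 0 ord_max = 1]
  | Spherical => [set x | \sum_(i < n.+1) x 0 i ^+ 2 = 1]
  | Hyperbolic => [set x | \sum_(i < n.+1 | i != ord_max) x 0 i ^+ 2
                           - x 0 ord_max ^+ 2 = -1 /\ 0 < x 0 ord_max]
  end.

Definition subspace_codim (Y : set point) (c : nat) : Prop :=
  exists W : {vspace point},
    (\dim W + c = n.+1)%N /\ Y = Xset `&` [set x | x \in W] /\ Y !=set0.

Definition is_subspace (Y : set point) : Prop := exists c, subspace_codim Y c.

Definition is_hyperplane (H : set point) : Prop := subspace_codim H 1.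

Definition gen_subspace (A Y : set point) : Prop :=
  is_subspace Y /\ A `<=` Y /\
  forall Y', is_subspace Y' -> A `<=` Y' -> Y `<=` Y'.

Definition codim (A : set point) (c : nat) : Prop :=
  exists Y, gen_subspace A Y /\ subspace_codim Y c.

Definition lfun (a x : point) : R := \sum_(i < n.+1) a 0 i * x 0 i.

(* Z is a closed half-space bounded by the hyperplane H, i.e. the closure of
   one of the two components of X \ H *)
Definition halfspace_of (H Z : set point) : Prop :=
  is_hyperplane H /\
  exists a : point, a != 0 /\
    H = Xset `&` [set x | lfun a x = 0] /\
    Z = Xset `&` [set x | 0 <= lfun a x].

Definition is_halfspace (Z : set point) : Prop := exists H, halfspace_of H Z.

Definition rel_interior (Y A : set point) (p : point) : Prop :=
  A p /\ nbhs p (fun y => Y y -> A y).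

(* A^r : the interior of A in the subspace it generates *)
Definition relint (A : set point) : set point :=
  [set p | exists Y, gen_subspace A Y /\ rel_interior Y A p].

Definition locally_finite_family (F : set (set point)) : Prop :=
  forall p, Xset p -> exists U, nbhs p U /\
    finite_set [set B | F B /\ (B `&` U) !=set0].

Definition polyhedron (P : set point) : Prop :=
  P !=set0 /\
  exists F : set (set point),
    (forall Z, F Z -> is_halfspace Z) /\
    P = Xset `&` \bigcap_(Z in F) Z /\
    locally_finite_family [set H | exists2 Z, F Z & halfspace_of H Z].

Definition thick (P : set point) : Prop := exists p, rel_interior Xset P p.

Definition essential_halfspace (P Z : set point) : Prop :=
  exists H, halfspace_of H Z /\ P `<=` Z /\
    exists p, rel_interior H (P `&` H) p.

Definition essential_hyperplane (P H : set point) : Prop :=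
  exists Z, halfspace_of H Z /\ P `<=` Z /\
    exists p, rel_interior H (P `&` H) p.

Definition partial_tessellation (Tiles : set (set point)) : Prop :=
  (forall T, Tiles T -> polyhedron T /\ thick T) /\
  forall T1 T2, Tiles T1 -> Tiles T2 -> T1 <> T2 ->
    rel_interior Xset T1 `&` rel_interior Xset T2 = set0.

Definition locally_finite_tess (Tiles : set (set point)) : Prop :=
  forall K : set point, compact K -> K `<=` Xset ->
    finite_set [set T | Tiles T /\ (T `&` K) !=set0].

Definition cell (Tiles : set (set point)) (C : set point) : Prop :=
  C !=set0 /\
  (exists F : set (set point), F !=set0 /\ F `<=` Tiles /\
     C = \bigcap_(T in F) T) /\
  forall T, Tiles T -> C `<=` T \/ relint C `&` T = set0.

Definition side (Tiles : set (set point)) (C : set point) : Prop :=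
  cell Tiles C /\ codim C 1.

End Geometry.

From HB Require Import structures.
From mathcomp Require Import all_boot all_order all_algebra.
From mathcomp Require Import all_classical all_reals all_analysis.
From mathcomp Require Import ring zify.
Import Order.TTheory GRing.Theory Num.Theory.
Import numFieldNormedType.Exports.
Local Open Scope classical_set_scope.
Local Open Scope ring_scope.
Set Implicit Arguments. Unset Strict Implicit. Unset Printing Implicit Defensive.

(* Each tile is cut out of X by linear inequalities [0 <= lfun a x].  Take p in the interior of
   S = T1 `&` T2 relative to H.  By local finiteness only the forms vanishing at p matter near p,
   and these vanish on the linear span W of H, so they are all positive multiples of a single form.
   Hence near p each tile is either a whole neighbourhood of p or a half-space bounded by H; as the
   interiors of T1 and T2 are disjoint, they lie in opposite half-spaces, and H is essential for
   both.  A third tile through p would, being convex, contain points near p off H, which are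
   interior points of T1 or of T2.  Straight-line constructions in R^(n+1) are brought back to X
   by radial projection. *)

Section LinearForm.
Variables (R : realType) (n : nat).
Local Notation point := 'rV[R]_(n.+1).
Implicit Types (a x y : point).

Lemma lfunD a x y : lfun a (x + y) = lfun a x + lfun a y.
Proof. by rewrite /lfun -big_split; apply: eq_bigr => i _; rewrite mxE mulrDr. Qed.

Lemma lfunZ a x (c : R) : lfun a (c *: x) = c * lfun a x.
Proof. by rewrite /lfun mulr_sumr; apply: eq_bigr => i _; rewrite mxE mulrCA. Qed.

Lemma lfun0 a : lfun a 0 = 0.
Proof. by rewrite -(scale0r 0) lfunZ mul0r. Qed.

Lemma lfunB a x y : lfun a (x - y) = lfun a x - lfun a y.
Proof. by rewrite lfunD -scaleN1r lfunZ mulN1r. Qed.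

Lemma lfunNl a x : lfun (- a) x = - lfun a x.
Proof. by rewrite /lfun -sumrN; apply: eq_bigr => i _; rewrite mxE mulNr. Qed.

Lemma lfun_sum a (s : seq point) : lfun a (\sum_(x <- s) x) = \sum_(x <- s) lfun a x.
Proof. exact: (big_morph (lfun a) (lfunD a) (lfun0 a)). Qed.

Lemma lfun_self_gt0 a : a != 0 -> 0 < lfun a a.
Proof.
move=> a0; have sq_ge0 i : 0 <= a 0 i * a 0 i by rewrite -expr2 sqr_ge0.
rewrite lt0r sumr_ge0 ?andbT //; apply: contra a0; rewrite psumr_eq0 //.
move=> /allP a_eq0; apply/eqP/matrixP => i j; rewrite ord1 mxE.
by have := a_eq0 j (mem_index_enum j); rewrite -expr2 sqrf_eq0 => /eqP.
Qed.

Lemma lfun_ge0_comb a x0 (s : seq point) (t : R) : 0 < t -> 0 <= lfun a x0 ->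
  (forall x, x \in s -> 0 <= lfun a x) ->
  0 <= lfun a (x0 + t *: \sum_(x <- s) x) /\
  (lfun a (x0 + t *: \sum_(x <- s) x) = 0 -> forall x, x \in s -> lfun a x = 0).
Proof.
move=> t0 ax0 as_ge0; have sum_ge0 : 0 <= \sum_(x <- s) lfun a x by rewrite big_seq sumr_ge0.
rewrite lfunD lfunZ lfun_sum; split; first by rewrite addr_ge0 // mulr_ge0 // ltW.
move=> /eqP; rewrite paddr_eq0 //; last by rewrite mulr_ge0 // ltW.
rewrite mulf_eq0 (gt_eqF t0) /= => /andP [_].
rewrite big_seq psumr_eq0 // => /allP s0 x xs.
by have := s0 x xs; rewrite xs => /eqP.
Qed.

Lemma lfun_continuous a : continuous (lfun a).
Proof.
move=> p; apply: (@cvg_big _ _ _ _ _ add_continuous _ _ _ _ _ (nbhs_filter p)) => i _.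
exact: cvgM (cvg_cst _) (@coord_continuous _ _ _ _ _ p).
Qed.

Lemma lfun_span_eq0 a (s : seq point) :
  (forall x, x \in s -> lfun a x = 0) -> forall x, x \in << s >>%VS -> lfun a x = 0.
Proof.
elim: s => [_ x|y s IHs s0 x]; first by rewrite span_nil memv0 => /eqP ->; rewrite lfun0.
rewrite span_cons => /memv_addP [_ /vlineP [k ->] [v sv ->]].
rewrite lfunD lfunZ s0 ?mem_head // mulr0 add0r IHs // => z zs.
by rewrite s0 // in_cons zs orbT.
Qed.

Lemma dimv_full : \dim (fullv : {vspace point}) = n.+1.
Proof. by rewrite dimvf /dim /= mul1n. Qed.

Lemma exists_notin_vspace (U : {vspace point}) : (\dim U < n.+1)%N -> exists v, v \notin U.
Proof.
move=> dU; apply: contrapT => all_in; suff: (fullv <= U)%VS.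
  by move/dimvS; rewrite dimv_full; lia.
apply/subvP => v _; apply: contrapT => vU; apply: all_in; exists v; exact/negP.
Qed.

Lemma exists_spanning_seq (A : set point) :
  exists2 s : seq point, (forall x, x \in s -> A x) & forall x, A x -> x \in << s >>%VS.
Proof.
suff: forall m (s : seq point), (n.+1 - \dim << s >> <= m)%N -> (forall x, x \in s -> A x) ->
    exists2 s' : seq point, (forall x, x \in s' -> A x) & forall x, A x -> x \in << s' >>%VS.
  by move=> /(_ n.+1 [::]); apply; rewrite ?leq_subr.
elim=> [|m IHm] s dim_s sA.
  exists s => // x _; suff ->: << s >>%VS = fullv by rewrite memvf.
  apply/eqP; rewrite eqEdim subvf dimv_full; lia.
have [spans|] := pselect (forall x, A x -> x \in << s >>%VS); first by exists s.
move=> /existsNP [x /not_implyP [Ax /negP xs]].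
apply: (IHm (x :: s)); last by move=> y; rewrite in_cons => /predU1P [->|/sA].
suff: (\dim << s >> < \dim << x :: s >>)%N by lia.
rewrite span_cons (ltn_leqif (dimv_leqif_sup (addvSr _ _))).
by apply: contra xs => /subvP; apply; rewrite (subvP (addvSl _ _)) ?memv_line.
Qed.

Section Hyperplane.
Variables (W : {vspace point}) (a : point).
Hypotheses (dimW : (\dim W + 1 = n.+1)%N) (a_neq0 : a != 0)
  (a_W : forall w, w \in W -> lfun a w = 0).

Lemma hyperplane_decomp x : exists2 w, w \in W & exists mu, x = w + mu *: a.
Proof.
have aW : a \notin W.
  by apply: contraTN (lfun_self_gt0 a_neq0) => /a_W ->; rewrite ltxx.
suff: x \in (W + <[a]>)%VS.
  by move=> /memv_addP [w wW [_ /vlineP [mu ->] ->]]; exists w => //; exists mu.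
suff ->: (W + <[a]>)%VS = fullv by rewrite memvf.
apply/eqP; rewrite eqEdim subvf dimv_full.
suff: (\dim W < \dim (W + <[a]>))%N by lia.
rewrite (ltn_leqif (dimv_leqif_sup (addvSl W <[a]>))).
by apply: contra aW => /subvP; apply; rewrite (subvP (addvSr _ _)) ?memv_line.
Qed.

Lemma lfun_eq0_memv x : lfun a x = 0 -> x \in W.
Proof.
have [w wW [mu ->]] := hyperplane_decomp x.
rewrite lfunD lfunZ a_W // add0r => /eqP; rewrite mulf_eq0.
rewrite (gt_eqF (lfun_self_gt0 a_neq0)) orbF => /eqP ->.
by rewrite scale0r addr0.
Qed.

Lemma lfun_proportional b : (forall w, w \in W -> lfun b w = 0) ->
  exists lam, forall x, lfun b x = lam * lfun a x.
Proof.
move=> b_W; exists (lfun b a / lfun a a) => x.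
have [w wW [mu ->]] := hyperplane_decomp x.
rewrite !lfunD !lfunZ (a_W wW) (b_W _ wW) !add0r.
by field; rewrite gt_eqF ?lfun_self_gt0.
Qed.

End Hyperplane.
End LinearForm.

Section Topology.
Variables (R : realType) (n : nat).
Local Notation point := 'rV[R]_(n.+1).

Lemma nbhs_distP (p : point) (A : set point) :
  nbhs p A <-> exists2 e : R, 0 < e & forall x, `|p - x| < e -> A x.
Proof.
split=> [/nbhs_ballP [e e0 Ae]|[e e0 Ae]].
  by exists e => // x pxe; apply: Ae; rewrite -ball_normE.
by apply/nbhs_ballP; exists e => //= x; rewrite -ball_normE; apply: Ae.
Qed.

Lemma nbhs_dist_lt (p y : point) (e : R) : `|p - y| < e -> nbhs y [set z | `|p - z| < e].
Proof.
move=> pye; apply/nbhs_distP; exists (e - `|p - y|); first by rewrite subr_gt0.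
move=> z yz /=; rewrite -(subrK y p) -addrA; apply: le_lt_trans (ler_normD _ _) _.
by rewrite -ltrBrDl.
Qed.

Lemma nbhs_lfun_gt0 (a p : point) : 0 < lfun a p -> nbhs p [set x | 0 < lfun a x].
Proof. exact: (cvgr_gt (lfun a p) (@lfun_continuous _ _ a p) 0). Qed.

Lemma nbhs_lfun_neq0 (a p : point) : lfun a p != 0 -> nbhs p [set x | lfun a x != 0].
Proof. exact: (cvgr_neq0 (lfun a p) (@lfun_continuous _ _ a p)). Qed.

Lemma sum_sqr_continuous (P : pred 'I_n.+1) :
  continuous (fun x : point => \sum_(i | P i) x 0 i ^+ 2).
Proof.
move=> p; apply: (@cvg_big _ _ _ _ _ add_continuous _ _ _ _ _ (nbhs_filter p)) => i _.
exact: cvgM (@coord_continuous _ _ _ _ _ p) (@coord_continuous _ _ _ _ _ p).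
Qed.

Lemma sum_sqrZ (P : pred 'I_n.+1) (c : R) (x : point) :
  \sum_(i | P i) (c *: x) 0 i ^+ 2 = c ^+ 2 * \sum_(i | P i) x 0 i ^+ 2.
Proof. by rewrite mulr_sumr; apply: eq_bigr => i _; rewrite mxE exprMn. Qed.

Lemma exists_small_step (v : point) (e : R) : 0 < e ->
  exists2 s : R, 0 < s & `|s *: v| <= e / 2.
Proof.
move=> e0; have v1_gt0 : 0 < `|v| + 1 by rewrite ltr_wpDl.
exists (e / (2 * (`|v| + 1))); first by rewrite divr_gt0 ?mulr_gt0.
rewrite mx_normZ gtr0_norm ?divr_gt0 ?mulr_gt0 //.
apply: (@le_trans _ _ (e / (2 * (`|v| + 1)) * (`|v| + 1))).
  by rewrite ler_wpM2l ?lerDl // divr_ge0 ?mulr_ge0 ?ltW.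
suff -> : e / (2 * (`|v| + 1)) * (`|v| + 1) = e / 2 by [].
by field; rewrite lt0r_neq0.
Qed.

Lemma lfun_segment_root (a p y : point) : 0 < lfun a p -> lfun a y < 0 ->
  exists2 z, `|p - z| <= `|p - y| & lfun a z = 0.
Proof.
move=> ap ay; set s := lfun a p / (lfun a p - lfun a y).
have d_gt0 : 0 < lfun a p - lfun a y by rewrite subr_gt0 (lt_trans ay).
exists (p + s *: (y - p)).
  have s_ge0 : 0 <= s by rewrite divr_ge0 ?ltW.
  have s_le1 : s <= 1 by rewrite ler_pdivrMr // mul1r lerDl oppr_ge0 ltW.
  rewrite opprD addrA subrr add0r normrN mx_normZ -opprB normrN ger0_norm //.
  by rewrite ler_piMl.
by rewrite lfunD lfunZ lfunB /s; field; exact: lt0r_neq0.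
Qed.

End Topology.

Section Gauge.
Variables (R : realType) (g : geometry) (n : nat).
Local Notation point := 'rV[R]_(n.+1).
Local Notation X := (@Xset R g n).

(* X is the level set [gauge = 1] and the gauge is positive near X, so [rproj] projects a
   neighbourhood of X radially onto X. *)
Definition gauge (x : point) : R :=
  match g with
  | Euclidean => x 0 ord_max
  | Spherical => Num.sqrt (\sum_(i < n.+1) x 0 i ^+ 2)
  | Hyperbolic => Num.sqrt (x 0 ord_max ^+ 2 - \sum_(i < n.+1 | i != ord_max) x 0 i ^+ 2)
  end.

Definition rproj (x : point) : point := (gauge x)^-1 *: x.

Lemma sqrt_continuous_comp (F : point -> R) :
  continuous F -> continuous (fun x => Num.sqrt (F x)).
Proof. by move=> cF x; apply: continuous_comp (cF x) _; exact: sqrt_continuous. Qed.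

Lemma gauge_continuous : continuous gauge.
Proof.
rewrite /gauge; case: g; first by move=> x; exact: coord_continuous.
  exact/sqrt_continuous_comp/sum_sqr_continuous.
apply: sqrt_continuous_comp => x.
apply: (@cvgB _ _ _ _ (nbhs_filter x)); last exact: sum_sqr_continuous.
exact: cvgM (@coord_continuous _ _ _ _ _ x) (@coord_continuous _ _ _ _ _ x).
Qed.

Lemma gauge_eq1 (p : point) : X p -> gauge p = 1.
Proof.
rewrite /gauge /Xset; case: g => //= [-> | [Xp _]]; first by rewrite sqrtr1.
by rewrite -opprB Xp opprK sqrtr1.
Qed.

Lemma Xset_neq0 : ~ X 0.
Proof.
rewrite /Xset; case: g => /=; rewrite ?mxE ?ltxx; first by move/eqP; rewrite eq_sym oner_eq0.
  by rewrite big1 => [/eqP|i _]; rewrite ?mxE ?expr0n // eq_sym oner_eq0.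
by case.
Qed.

Lemma near_rproj_in_X (p : point) : X p -> nbhs p [set x | 0 < gauge x /\ X (rproj x)].
Proof.
move=> Xp; have gauge_gt0 : nbhs p [set x | 0 < gauge x].
  by apply: (cvgr_gt (gauge p) (@gauge_continuous p)); rewrite gauge_eq1.
rewrite /rproj; move: Xp gauge_gt0; rewrite /gauge /Xset; case: g => /= Xp.
- apply: filterS => x /= x_gt0; split => //; rewrite mxE mulVf //; exact: lt0r_neq0.
- apply: filterS => x /= s_gt0; split => //.
  have s_pos : 0 < \sum_(i < n.+1) x 0 i ^+ 2 by rewrite -sqrtr_gt0.
  by rewrite sum_sqrZ exprVn sqr_sqrtr ?mulVf ?ltW ?lt0r_neq0.
- have xn_gt0 : nbhs p [set x : point | 0 < x 0 ord_max].
    exact: (cvgr_gt _ (@coord_continuous _ _ _ _ _ p) 0 Xp.2).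
  move=> L_gt0; apply: filterS (filterI L_gt0 xn_gt0) => x /= [sL_gt0 xn_pos].
  set L := x 0 ord_max ^+ 2 - _ in sL_gt0 *.
  have L_pos : 0 < L by rewrite -sqrtr_gt0.
  rewrite sum_sqrZ !mxE exprMn -mulrBr -opprB -/L exprVn sqr_sqrtr ?ltW //.
  by rewrite mulrN mulVf ?lt0r_neq0 // mulr_gt0 // invr_gt0.
Qed.

Lemma rproj_id (p : point) : X p -> rproj p = p.
Proof. by move=> Xp; rewrite /rproj gauge_eq1 // invr1 scale1r. Qed.

Lemma lfun_rproj (a x : point) : lfun a (rproj x) = (gauge x)^-1 * lfun a x.
Proof. exact: lfunZ. Qed.

Lemma lfun_rproj_ge0 (a x : point) : 0 < gauge x -> (0 <= lfun a (rproj x)) = (0 <= lfun a x).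
Proof. by move=> gx; rewrite lfun_rproj pmulr_rge0 // invr_gt0. Qed.

Lemma lfun_rproj_gt0 (a x : point) : 0 < gauge x -> (0 < lfun a (rproj x)) = (0 < lfun a x).
Proof. by move=> gx; rewrite lfun_rproj pmulr_rgt0 // invr_gt0. Qed.

Lemma rproj_memv (W : {vspace point}) (x : point) : (rproj x \in W) = (x \in W) || (gauge x == 0).
Proof. by rewrite /rproj rpredZeq invr_eq0 orbC. Qed.

Lemma near_rproj (p : point) (U : set point) : X p -> nbhs p U ->
  nbhs p [set x | [/\ 0 < gauge x, X (rproj x) & U (rproj x)]].
Proof.
move=> Xp pU; have rproj_cont : {for p, continuous rproj}.
  apply: continuousZ; last exact: cvg_id.
  by apply: continuousV; [rewrite gauge_eq1 ?oner_neq0 | exact: gauge_continuous].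
have pU' : nbhs p (rproj @^-1` U) by apply: rproj_cont; rewrite rproj_id.
by apply: filterS (filterI (near_rproj_in_X Xp) pU') => x /= [[]].
Qed.

Lemma near_rproj_line (p v : point) (U : set point) : X p -> nbhs p U ->
  exists2 d : R, 0 < d & forall t, 0 < t <= d ->
    [/\ 0 < gauge (p + t *: v), X (rproj (p + t *: v)) & U (rproj (p + t *: v))].
Proof.
move=> Xp /(near_rproj Xp) /nbhs_distP [e e0 pe].
have v1_gt0 : 0 < `|v| + 1 by rewrite ltr_wpDl.
exists (e / (`|v| + 1)) => [|t /andP [t0 td]]; first by rewrite divr_gt0.
apply: pe; rewrite opprD addrA subrr add0r normrN mx_normZ gtr0_norm //.
apply: (@lt_le_trans _ _ (t * (`|v| + 1))); first by rewrite ltr_pM2l ?ltrDl.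
by rewrite -ler_pdivlMr.
Qed.

Lemma exists_rproj_line (p v : point) (U : set point) : X p -> nbhs p U ->
  exists2 t : R, 0 < t &
    [/\ 0 < gauge (p + t *: v), X (rproj (p + t *: v)) & U (rproj (p + t *: v))].
Proof.
move=> Xp pU; have [d d0 pd] := near_rproj_line v Xp pU.
by exists d => //; apply: pd; rewrite d0 lexx.
Qed.

End Gauge.

Section Polyhedron.
Variables (R : realType) (g : geometry) (n : nat).
Local Notation point := 'rV[R]_(n.+1).
Local Notation X := (@Xset R g n).

Definition hplane (a : point) : set point := X `&` [set x | lfun a x = 0].

Definition polyhedral_forms (T A : set point) : Prop :=
  [/\ forall a, A a -> a != 0,
      T = X `&` [set x | forall a, A a -> 0 <= lfun a x]
    & locally_finite_family g (hplane @` A)].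

Lemma locally_finite_familyS (F F' : set (set point)) :
  F' `<=` F -> locally_finite_family g F -> locally_finite_family g F'.
Proof.
move=> F'F lfF p Xp; have [U [pU finU]] := lfF p Xp.
by exists U; split => //; apply: sub_finite_set finU => B [/F'F].
Qed.

Lemma locally_finite_familyU (F F' : set (set point)) :
  locally_finite_family g F -> locally_finite_family g F' -> locally_finite_family g (F `|` F').
Proof.
move=> lfF lfF' p Xp; have [U [pU finU]] := lfF p Xp; have [U' [pU' finU']] := lfF' p Xp.
exists (U `&` U'); split; first exact: filterI.
suff: finite_set ([set B | F B /\ (B `&` U) !=set0] `|` [set B | F' B /\ (B `&` U') !=set0]).
  apply: sub_finite_set => B [[FB|F'B] [x [Bx [Ux U'x]]]];
    by [left; split=> //; exists x | right; split=> //; exists x].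
by rewrite finite_setU.
Qed.

Lemma polyhedron_forms (T : set point) : polyhedron g T -> exists A, polyhedral_forms T A.
Proof.
move=> [_ [F [F_hs [-> lfF]]]].
exists [set a | exists2 Z, F Z & [/\ a != 0, is_hyperplane g (hplane a) &
                                     Z = X `&` [set x | 0 <= lfun a x]]].
split; first by move=> a [Z _ []].
- rewrite eqEsubset; split=> x [Xx xF]; split=> //.
    by move=> a [Z FZ [_ _ Z_a]]; have := xF Z FZ; rewrite Z_a => -[].
  move=> Z FZ; have [H [Hhyp [a [a0 [H_a Z_a]]]]] := F_hs Z FZ.
  by rewrite Z_a; split=> //; apply: xF; exists Z => //; rewrite /hplane -H_a.
- apply: locally_finite_familyS lfF => _ [a [Z FZ [a0 ahyp Z_a]] <-].
  by exists Z => //; split=> //; exists a.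
Qed.

Lemma tile_forms (Tiles : set (set point)) (T : set point) :
  partial_tessellation g Tiles -> Tiles T -> thick g T /\ exists A, polyhedral_forms T A.
Proof. by move=> [tiles_poly _] /tiles_poly [/polyhedron_forms]. Qed.

Lemma polyhedral_formsI (T T' A A' : set point) :
  polyhedral_forms T A -> polyhedral_forms T' A' -> polyhedral_forms (T `&` T') (A `|` A').
Proof.
move=> [A0 -> lfA] [A'0 -> lfA']; split; first by move=> a [/A0|/A'0].
  apply/seteqP; split=> [x [[Xx xA] [_ xA']]|x [Xx xAA']]; first by split=> // a [/xA|/xA'].
  by split; split=> // a Aa; apply: xAA'; [left | right].
by rewrite image_setU; exact: locally_finite_familyU.
Qed.

Definition inner_ball (A : set point) (q : point) (e : R) : Prop :=
  forall x, `|q - x| < e -> forall a, A a -> 0 <= lfun a x.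

Section PolyhedralForms.
Variables (T A : set point).
Hypothesis TA : polyhedral_forms T A.

Lemma polyhedral_memP x : T x <-> X x /\ forall a, A a -> 0 <= lfun a x.
Proof. by case: TA => _ -> _. Qed.

Lemma polyhedral_sub_X : T `<=` X.
Proof. by move=> x /polyhedral_memP []. Qed.

Lemma polyhedral_ge0 a x : T x -> A a -> 0 <= lfun a x.
Proof. by move=> /polyhedral_memP [_]; apply. Qed.

Lemma near_incident_hplanes p : X p ->
  nbhs p [set x | forall a, A a -> hplane a x -> lfun a p = 0].
Proof.
case: TA => _ _ lfA Xp; have [U [pU finU]] := lfA p Xp.
set near_U := [set B | _] in finU; have [D D_U] := finite_fsetP.1 finU.
pose avoid := \bigcap_(B in near_U) [set x | B p \/ ~ B x].
have p_avoid : nbhs p avoid.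
  rewrite /avoid D_U; apply: filter_bigI => B BD.
  have [[a Aa <-] _] : near_U B by rewrite D_U.
  have [ap|ap] := eqVneq (lfun a p) 0.
    by apply: (@nearW _ _ _ (nbhs_filter p)) => x; left; split.
  by apply: filterS (nbhs_lfun_neq0 ap) => x /eqP ax; right=> -[_].
apply: filterS (filterI pU p_avoid) => x [Ux x_avoid] a Aa ax.
have [[_ /eqP //]|//] : hplane a p \/ ~ hplane a x.
by apply: x_avoid; split; [exists a | exists x].
Qed.

(* A form positive at p stays nonnegative near p: otherwise the segment from p to y would cross
   its hyperplane close to p. *)
Lemma polyhedral_local_cone p : T p ->
  exists2 e : R, 0 < e & forall y, `|p - y| < e -> X y ->
    (forall a, A a -> lfun a p = 0 -> 0 <= lfun a y) -> T y.
Proof.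
move=> /polyhedral_memP [Xp Ap].
have /nbhs_distP [e e0 pe] := near_rproj Xp (near_incident_hplanes Xp).
exists e => // y py Xy ay_ge0; apply/polyhedral_memP; split => // a Aa.
have [ap|ap] := eqVneq (lfun a p) 0; first exact: ay_ge0.
rewrite leNgt; apply/negP => ay.
have ap_gt0 : 0 < lfun a p by rewrite lt0r ap Ap.
have [z pz az] := lfun_segment_root ap_gt0 ay.
have [gz Xz incident] := pe z (le_lt_trans pz py).
by move/eqP: ap; apply; apply: incident => //; split => //=; rewrite lfun_rproj az mulr0.
Qed.

Lemma thick_inner_ball : thick g T -> exists q, exists2 e : R, 0 < e & inner_ball A q e.
Proof.
move=> [q [Tq qT]]; have Xq := ((polyhedral_memP q).1 Tq).1.
have /nbhs_distP [e e0 qe] := near_rproj Xq qT.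
exists q, e => // x qx a Aa; have [gx Xx Tx] := qe x qx.
by rewrite -(lfun_rproj_ge0 a gx); apply: polyhedral_ge0 (Tx Xx) Aa.
Qed.

End PolyhedralForms.

Section InnerBall.
Variables (A : set point) (q : point) (e : R).
Hypotheses (e_gt0 : 0 < e) (qA : inner_ball A q e).

Lemma inner_ball_center_gt0 a : A a -> a != 0 -> 0 < lfun a q.
Proof.
move=> Aa a0; have [s s0 sa] := exists_small_step a e_gt0.
have : 0 <= lfun a (q - s *: a).
  by apply: qA Aa; rewrite opprB addrC subrK (le_lt_trans sa) // ltr_pdivrMr // ltr_pMr ?ltr1n.
rewrite lfunB lfunZ subr_ge0; apply: lt_le_trans.
by rewrite mulr_gt0 ?lfun_self_gt0.
Qed.

Lemma inner_ball_avoid b : b != 0 -> exists q', lfun b q' != 0 /\ inner_ball A q' (e / 2).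
Proof.
move=> b0; have [s s0 sb] := exists_small_step b e_gt0.
have shrink q' : `|q - q'| <= e / 2 -> inner_ball A q' (e / 2).
  move=> qq' x q'x; apply: qA; rewrite -(subrK q' q) -addrA.
  by apply: le_lt_trans (ler_normD _ _) _; rewrite [e]splitr ler_ltD.
have [bq|bq] := eqVneq (lfun b q) 0; last first.
  by exists q; split=> //; apply: shrink; rewrite subrr normr0 divr_ge0 ?ltW.
exists (q + s *: b); split; last by apply: shrink; rewrite opprD addrA subrr add0r normrN.
by rewrite lfunD lfunZ bq add0r mulf_neq0 ?lt0r_neq0 ?lfun_self_gt0.
Qed.

End InnerBall.
End Polyhedron.

Section Face.
Variables (R : realType) (g : geometry) (n : nat).
Local Notation point := 'rV[R]_(n.+1).
Local Notation X := (@Xset R g n).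
Local Notation rproj := (rproj g).
Implicit Types (W : {vspace point}) (H : set point) (a p : point).

Lemma lfun_vanish_of_face W H a p : H = X `&` [set x | x \in W] -> H p ->
  nbhs p (fun y => H y -> 0 <= lfun a y) -> lfun a p = 0 ->
  forall w, w \in W -> lfun a w = 0.
Proof.
move=> H_W Hp pH ap; move: Hp; rewrite H_W => -[Xp pW].
have W_ge0 v : v \in W -> 0 <= lfun a v.
  move=> vW; have [t t0 [gz Xz z_ge0]] := exists_rproj_line v Xp pH.
  have /z_ge0 : H (rproj (p + t *: v)).
    by rewrite H_W; split; rewrite //= rproj_memv rpredD ?rpredZ.
  by rewrite lfun_rproj_ge0 // lfunD lfunZ ap add0r pmulr_rge0.
move=> w wW; apply/eqP; rewrite eq_le W_ge0 // andbT -oppr_ge0.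
by rewrite -mulN1r -lfunZ W_ge0 // scaleN1r rpredN.
Qed.

Lemma exists_positive_near a p (e : R) : X p -> a != 0 -> lfun a p = 0 -> 0 < e ->
  exists y, [/\ X y, `|p - y| < e & 0 < lfun a y].
Proof.
move=> Xp a0 ap e0; have pe : nbhs p [set x | `|p - x| < e] by apply/nbhs_distP; exists e.
have [t t0 [gz Xy py]] := exists_rproj_line a Xp pe.
exists (rproj (p + t *: a)); split => //.
by rewrite lfun_rproj_gt0 // lfunD lfunZ ap add0r mulr_gt0 ?lfun_self_gt0.
Qed.

Lemma near_halfspace_interior (T : set point) a p y (e : R) :
  (forall x, `|p - x| < e -> X x -> 0 <= lfun a x -> T x) ->
  X y -> `|p - y| < e -> 0 < lfun a y -> rel_interior X T y.
Proof.
move=> Tnear Xy py ay; split; first by apply: Tnear => //; exact: ltW.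
apply: filterS (filterI (nbhs_dist_lt py) (nbhs_lfun_gt0 ay)) => x [px ax] Xx.
by apply: Tnear => //; exact: ltW.
Qed.

Lemma hyperplane_not_open W q : (\dim W + 1 = n.+1)%N -> X q ->
  ~ nbhs q (fun y => X y -> y \in W).
Proof.
move=> dimW Xq qW; have [v vW] : exists v, v \notin W by apply: exists_notin_vspace; lia.
have [t t0 [gz Xz /(_ Xz)]] := exists_rproj_line v Xq qW.
rewrite rproj_memv (gt_eqF gz) orbF rpredDl ?(nbhs_singleton qW Xq) //.
by rewrite rpredZeq (negPf vW) (gt_eqF t0).
Qed.

Lemma memv_of_X_subset W (V : {vspace point}) x0 : X x0 -> x0 \in W ->
  (forall x, X x -> x \in W -> x \in V) -> forall w, w \in W -> w \in V.
Proof.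
move=> Xx0 x0W WV w wW; have x0V := WV _ Xx0 x0W.
have [t t0 [gz Xz _]] := exists_rproj_line w Xx0 (@filterT _ (nbhs x0) _).
have /WV : rproj (x0 + t *: w) \in W by rewrite rproj_memv rpredD ?rpredZ.
rewrite rproj_memv (gt_eqF gz) orbF => /(_ Xz).
by rewrite rpredDl // rpredZeq (gt_eqF t0).
Qed.

Lemma is_subspace_vspace (V : {vspace point}) x : X x -> x \in V ->
  is_subspace g (X `&` [set y | y \in V]).
Proof.
move=> Xx xV; exists (n.+1 - \dim V)%N, V; split; last by split=> //; exists x.
by have := dimvS (subvf V); rewrite dimv_full => ?; rewrite subnKC.
Qed.

Lemma polyhedral_relint_point W H (T A : set point) x0 :
  polyhedral_forms g T A -> gen_subspace g T H -> H = X `&` [set x | x \in W] -> T x0 ->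
  exists p, T p /\ nbhs p (fun y => H y -> T y).
Proof.
move=> TA [_ [TH Hmin]] H_W Tx0; have TX := polyhedral_sub_X TA.
have [s sT T_s] := exists_spanning_seq T.
have W_s : forall w, w \in W -> w \in << s >>%VS.
  have H_s : H `<=` X `&` [set x | x \in << s >>%VS].
    apply: Hmin => [|x Tx]; first exact: is_subspace_vspace (TX _ Tx0) (T_s _ Tx0).
    by split; [exact: TX | exact: T_s].
  have := TH _ Tx0; rewrite H_W => -[Xx0 x0W].
  apply: memv_of_X_subset Xx0 x0W _ => x Xx xW.
  by have [] : (X `&` [set x | x \in << s >>%VS]) x by apply: H_s; rewrite H_W.
(* A defining form vanishing at the projection of x0 + t * (sum of s) vanishes on all of s. *)
have [t t0 [gu Xp _]] :=
  exists_rproj_line (\sum_(x <- s) x) (TX _ Tx0) (@filterT _ (nbhs x0) _).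
set u := x0 + _ in gu Xp.
have u_forms a : A a -> 0 <= lfun a u /\ (lfun a u = 0 -> forall w, w \in W -> lfun a w = 0).
  move=> Aa; have [u_ge0 u0] := lfun_ge0_comb t0 (polyhedral_ge0 TA Tx0 Aa)
    (fun x xs => polyhedral_ge0 TA (sT x xs) Aa).
  by split=> // /u0 s0 w /W_s; apply: lfun_span_eq0.
have Tp : T (rproj u).
  by apply/(polyhedral_memP TA); split=> // a /u_forms []; rewrite lfun_rproj_ge0.
exists (rproj u); split=> //; have [e e0 cone] := polyhedral_local_cone TA Tp.
apply/nbhs_distP; exists e => // y py; rewrite H_W => -[Xy yW]; apply: cone => // a Aa.
rewrite lfun_rproj => /eqP; rewrite mulf_eq0 invr_eq0 (gt_eqF gu) /=.
by move=> /eqP /(u_forms _ Aa).2 ->.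
Qed.

Lemma exists_X_off_line h : X h -> (0 < n)%N -> exists q, X q /\ h \notin <[q]>%VS.
Proof.
move=> Xh n_gt0; have h0 : h != 0 by apply: contraPneq Xh => ->; exact: Xset_neq0.
have [v vh] : exists v, v \notin <[h]>%VS by apply: exists_notin_vspace; rewrite dim_vline h0.
have [t t0 [gz Xq _]] := exists_rproj_line v Xh (@filterT _ (nbhs h) _).
exists (rproj (h + t *: v)); split=> //; apply: contra vh => /vlineP [k].
rewrite /rproj scalerA scalerDr scalerA; set c := k * _ => hk.
have c0 : c != 0 by apply: contraNneq h0 => c0; rewrite hk c0 !mul0r !scale0r addr0.
have ct0 : c * t != 0 by rewrite mulf_neq0 // lt0r_neq0.
rewrite -[v](scalerK ct0) memvZ // (_ : _ *: v = h - c *: h) ?rpredB ?memvZ ?memv_line //.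
by rewrite {1}hk addrAC subrr add0r.
Qed.

Lemma gen_hyperplane_nonempty W H (S : set point) : (\dim W + 1 = n.+1)%N ->
  H = X `&` [set x | x \in W] -> H !=set0 -> gen_subspace g S H -> S !=set0.
Proof.
move=> dimW H_W [h Hh] [_ [_ Hmin]]; apply: contrapT => noS.
have HY Y : is_subspace g Y -> H `<=` Y.
  by move=> Ysub; apply: Hmin => // x Sx; case: noS; exists x.
move: Hh; rewrite H_W => -[Xh hW].
have h0 : h != 0 by apply: contraPneq Xh => ->; exact: Xset_neq0.
have [n0|n_gt0] := posnP n.
  have W0 : W = 0%VS by apply/eqP; rewrite -dimv_eq0; apply/eqP; lia.
  by move: hW; rewrite W0 /= memv0; apply/negP.
have [q [Xq hq]] := exists_X_off_line Xh n_gt0.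
have /(HY _ (is_subspace_vspace Xq (memv_line q))) [_ /= hq'] : H h by rewrite H_W.
by rewrite hq' in hq.
Qed.

Lemma gen_subspace_uniq (S Y Y' : set point) :
  gen_subspace g S Y -> gen_subspace g S Y' -> Y = Y'.
Proof.
by move=> [YS [SY Ymin]] [Y'S [SY' Y'min]]; apply/seteqP; split; [apply: Ymin | apply: Y'min].
Qed.

Lemma halfspace_of_form W H a : is_hyperplane g H -> (\dim W + 1 = n.+1)%N ->
  H = X `&` [set x | x \in W] -> a != 0 -> (forall w, w \in W -> lfun a w = 0) ->
  halfspace_of g H (X `&` [set y | 0 <= lfun a y]).
Proof.
move=> Hhyp dimW H_W a0 aW; split => //; exists a; split => //; split => //.
rewrite H_W; apply/seteqP; split => y [Xy /= yW]; split => //=; first exact: aW.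
exact: (lfun_eq0_memv dimW a0 aW).
Qed.

Lemma polyhedral_near_face W H (T A : set point) p :
  (\dim W + 1 = n.+1)%N -> H = X `&` [set x | x \in W] ->
  polyhedral_forms g T A -> thick g T -> H p -> nbhs p (fun y => H y -> T y) ->
  exists2 e : R, 0 < e &
    (forall y, `|p - y| < e -> X y -> T y) \/
    (exists a, [/\ a != 0, forall w, w \in W -> lfun a w = 0,
       forall y, T y -> 0 <= lfun a y &
       forall y, `|p - y| < e -> X y -> 0 <= lfun a y -> T y]).
Proof.
move=> dimW H_W TA Tthick Hp pH; have Tp := nbhs_singleton pH Hp.
have [A_neq0 _ _] := TA.
have face_vanish a : A a -> lfun a p = 0 -> forall w, w \in W -> lfun a w = 0.
  move=> Aa ap; apply: lfun_vanish_of_face H_W Hp _ ap.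
  by apply: filterS pH => y yT /yT Ty; exact: (polyhedral_ge0 TA Ty Aa).
have [e e0 cone] := polyhedral_local_cone TA Tp; exists e => //.
have [[a0 [Aa0 a0p]]|no_face] := pselect (exists a, A a /\ lfun a p = 0); last first.
  by left=> y py Xy; apply: cone => // a Aa ap; case: no_face; exists a.
have a0W := face_vanish _ Aa0 a0p.
right; exists a0; split=> // [|y Ty|y py Xy a0y]; first exact: A_neq0.
  exact: (polyhedral_ge0 TA Ty Aa0).
apply: cone => // a Aa ap.
(* a = lam * a0, and lam > 0 is read off at the centre of an inner ball of T. *)
have [lam a_lam] := lfun_proportional dimW (A_neq0 _ Aa0) a0W (face_vanish _ Aa ap).
have [q [r r_gt0 qA]] := thick_inner_ball TA Tthick.
have a0q := inner_ball_center_gt0 r_gt0 qA Aa0 (A_neq0 _ Aa0).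
have := inner_ball_center_gt0 r_gt0 qA Aa (A_neq0 _ Aa).
rewrite a_lam pmulr_lgt0 // => lam_gt0.
by rewrite a_lam; apply: mulr_ge0 => //; exact: ltW.
Qed.

Lemma polyhedral_cone_interior (T A : set point) p q (r t : R) :
  polyhedral_forms g T A -> T p -> inner_ball A q r -> 0 < r -> 0 < t <= 1 ->
  0 < gauge g (p + t *: (q - p)) -> X (rproj (p + t *: (q - p))) ->
  rel_interior X T (rproj (p + t *: (q - p))).
Proof.
move=> TA Tp qA r0 /andP [t0 t1]; set z := p + _; set w := rproj z => gz Xw.
suff wT : nbhs w (fun y => X y -> T y) by split=> //; exact: (nbhs_singleton wT).
apply/nbhs_distP; exists (t * r / gauge g z) => [|y wy Xy]; first by rewrite !mulr_gt0 ?invr_gt0.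
apply/(polyhedral_memP TA); split=> // a Aa.
pose u := p + t^-1 *: (gauge g z *: y - p).
have qu : `|q - u| < r.
  have -> : q - u = (t^-1 * gauge g z) *: (w - y).
    by apply/matrixP => i j; rewrite /u /w /z /rproj !mxE; field; rewrite !lt0r_neq0.
  rewrite mx_normZ gtr0_norm ?mulr_gt0 ?invr_gt0 //.
  have -> : r = (t^-1 * gauge g z) * (t * r / gauge g z) by field; rewrite !lt0r_neq0.
  by rewrite ltr_pM2l ?mulr_gt0 ?invr_gt0.
have : 0 <= (1 - t) * lfun a p + t * lfun a u.
  apply: addr_ge0; apply: mulr_ge0;
    by rewrite ?subr_ge0 ?(polyhedral_ge0 TA Tp Aa) ?(qA _ qu _ Aa) // ltW.
have -> : (1 - t) * lfun a p + t * lfun a u = gauge g z * lfun a y.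
  by rewrite /u lfunD lfunZ lfunB lfunZ; field; rewrite lt0r_neq0.
by rewrite pmulr_rge0.
Qed.

Lemma essential_hyperplane_of_near H Z (T : set point) p :
  halfspace_of g H Z -> T `<=` Z -> H p -> nbhs p (fun y => H y -> T y) ->
  essential_hyperplane g T H.
Proof.
move=> HZ TZ Hp pT; exists Z; split=> //; split=> //; exists p.
by split; [split=> //; exact: (nbhs_singleton pT) | apply: filterS pT => y yT Hy; split; auto].
Qed.

Lemma thick_not_sub_hyperplane W H (T : set point) : (\dim W + 1 = n.+1)%N ->
  H = X `&` [set x | x \in W] -> thick g T -> ~ T `<=` H.
Proof.
move=> dimW H_W [q [Tq qT]] TH; have := TH _ Tq; rewrite H_W => -[Xq _].
apply: (hyperplane_not_open dimW Xq); apply: filterS qT => y yT Xy.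
by have := TH _ (yT Xy); rewrite H_W => -[].
Qed.

Lemma tiles_interior_disjoint (Tiles : set (set point)) (T T' : set point) y :
  partial_tessellation g Tiles -> Tiles T -> Tiles T' -> T <> T' ->
  rel_interior X T y -> rel_interior X T' y -> False.
Proof.
move=> [_ disj] Tt T't TT' yT yT'.
by have := disj _ _ Tt T't TT'; move/seteqP => [/(_ y (conj yT yT'))].
Qed.

End Face.

Section Tiles.
Variables (R : realType) (g : geometry) (n : nat).
Local Notation point := 'rV[R]_(n.+1).
Local Notation X := (@Xset R g n).
Local Notation rproj := (rproj g).
Variables (Tiles : set (set point)) (T1 T2 H : set point) (W : {vspace point}).
Hypotheses (tess : partial_tessellation g Tiles) (T1t : Tiles T1) (T2t : Tiles T2)
  (T12 : T1 <> T2) (dimW : (\dim W + 1 = n.+1)%N) (H_W : H = X `&` [set x | x \in W]).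

Lemma tiles_opposite_at_face p : H p -> nbhs p (fun y => H y -> (T1 `&` T2) y) ->
  exists a, exists2 e : R, 0 < e &
    [/\ a != 0, forall w, w \in W -> lfun a w = 0,
        forall y, (T1 y -> 0 <= lfun a y) /\ (T2 y -> lfun a y <= 0) &
        forall y, `|p - y| < e -> X y -> (0 <= lfun a y -> T1 y) /\ (lfun a y <= 0 -> T2 y)].
Proof.
move=> Hp pS; have [Xp pW] : X p /\ p \in W by move: Hp; rewrite H_W.
have [th1 [A1 T1A]] := tile_forms tess T1t; have [th2 [A2 T2A]] := tile_forms tess T2t.
have pT1 : nbhs p (fun y => H y -> T1 y) by apply: filterS pS => y yS /yS [].
have pT2 : nbhs p (fun y => H y -> T2 y) by apply: filterS pS => y yS /yS [].
have [e1 e1_gt0 near1] := polyhedral_near_face dimW H_W T1A th1 Hp pT1.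
have [e2 e2_gt0 near2] := polyhedral_near_face dimW H_W T2A th2 Hp pT2.
pose e := Num.min e1 e2; have e_gt0 : 0 < e by rewrite lt_min e1_gt0 e2_gt0.
have [pe1 pe2] : (forall y, `|p - y| < e -> `|p - y| < e1) /\
                 (forall y, `|p - y| < e -> `|p - y| < e2).
  by split=> y; rewrite lt_min => /andP [].
have absurd a : a != 0 -> (forall w, w \in W -> lfun a w = 0) ->
    (forall y, `|p - y| < e -> X y -> 0 <= lfun a y -> T1 y /\ T2 y) -> False.
  move=> a0 aW both; have [y [Xy py ay]] := exists_positive_near Xp a0 (aW _ pW) e_gt0.
  by apply: (tiles_interior_disjoint tess T1t T2t T12);
    apply: (near_halfspace_interior _ Xy py ay) => x px Xx ax; have [] := both x px Xx ax.
(* Unless T1 and T2 are on opposite sides of H, both contain an open set near p. *)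
case: near1 => [L1|[a1 [a1_0 a1W T1a1 R1]]]; case: near2 => [L2|[a2 [a2_0 a2W T2a2 R2]]].
- have p_int T e' : 0 < e' -> (forall y, `|p - y| < e' -> X y -> T y) -> rel_interior X T p.
    move=> e'0 Tnear; split; last by apply/nbhs_distP; exists e'.
    by apply: Tnear; rewrite ?subrr ?normr0.
  exfalso; apply: (tiles_interior_disjoint tess T1t T2t T12).
    exact: (p_int _ _ e1_gt0 L1).
  exact: (p_int _ _ e2_gt0 L2).
- exfalso; apply: (absurd a2) => // y py Xy ay.
  by split; [apply: L1; rewrite ?pe1 | apply: R2; rewrite ?pe2].
- exfalso; apply: (absurd a1) => // y py Xy ay.
  by split; [apply: R1; rewrite ?pe1 | apply: L2; rewrite ?pe2].
have [lam a2_lam] := lfun_proportional dimW a1_0 a1W a2W.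
have [lam_lt0|lam_gt0|lam0] := ltgtP lam 0; last first.
- by exfalso; move: (lfun_self_gt0 a2_0); rewrite a2_lam lam0 mul0r ltxx.
- exfalso; apply: (absurd a1) => // y py Xy ay; split; first by apply: R1; rewrite ?pe1.
  by apply: R2; rewrite ?pe2 // a2_lam; apply: mulr_ge0 => //; exact: ltW.
exists a1; exists e => //; split => // y.
  by split=> [/T1a1 // | /T2a2]; rewrite a2_lam nmulr_rge0.
move=> py Xy; split=> ay; first by apply: R1; rewrite ?pe1.
by apply: R2; rewrite ?pe2 // a2_lam nmulr_rge0.
Qed.

Lemma no_third_tile T p : Tiles T -> T <> T1 -> T <> T2 -> H p ->
  nbhs p (fun y => H y -> (T1 `&` T2) y) -> ~ T p.
Proof.
move=> Tt TT1 TT2 Hp pS Tp; have [Xp pW] : X p /\ p \in W by move: Hp; rewrite H_W.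
have [a [e e_gt0 [a0 aW _ near12]]] := tiles_opposite_at_face Hp pS.
have [Tthick [A TA]] := tile_forms tess Tt.
have [q0 [r r_gt0 q0A]] := thick_inner_ball TA Tthick.
have [q [aq qA]] := inner_ball_avoid r_gt0 q0A a0.
have pe : nbhs p [set x | `|p - x| < e] by apply/nbhs_distP; exists e.
have [d d_gt0 line] := near_rproj_line (q - p) Xp pe.
pose t := Num.min d 1; have t_gt0 : 0 < t by rewrite lt_min d_gt0 ltr01.
have t_le_d : 0 < t <= d by rewrite t_gt0 ge_min lexx.
have [gz Xw pw] := line t t_le_d.
set w := rproj _ in Xw pw.
have wT : rel_interior X T w.
  apply: polyhedral_cone_interior TA Tp qA _ _ gz Xw; first by rewrite divr_gt0.
  by rewrite t_gt0 ge_min lexx orbT.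
have aw : lfun a w = (gauge g (p + t *: (q - p)))^-1 * (t * lfun a q).
  by rewrite lfun_rproj lfunD lfunZ lfunB (aW _ pW) subr0 add0r.
have [aw_lt0|aw_gt0|] := ltgtP (lfun a w) 0; last first.
- by move/eqP; rewrite aw mulf_eq0 invr_eq0 (gt_eqF gz) mulf_eq0 (gt_eqF t_gt0) (negPf aq).
- apply: (tiles_interior_disjoint tess Tt T1t TT1 wT).
  by apply: (near_halfspace_interior _ Xw pw aw_gt0) => x px Xx; case: (near12 x px Xx).
- apply: (tiles_interior_disjoint tess Tt T2t TT2 wT).
  apply: (near_halfspace_interior (a := - a) _ Xw pw); last by rewrite lfunNl oppr_gt0.
  by move=> x px Xx; rewrite lfunNl oppr_ge0; case: (near12 x px Xx).
Qed.

Lemma relint_face_third : gen_subspace g (T1 `&` T2) H ->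
  forall T, Tiles T -> T <> T1 -> T <> T2 -> relint g (T1 `&` T2) `&` T = set0.
Proof.
move=> genH T Tt TT1 TT2; apply/seteqP; split=> // y [[Y [genY [Sy yS]]] Ty].
rewrite (gen_subspace_uniq genY genH) in yS.
exact: (no_third_tile Tt TT1 TT2 (genH.2.1 _ Sy) yS Ty).
Qed.

Lemma face_halfspaces p : is_hyperplane g H -> H p -> nbhs p (fun y => H y -> (T1 `&` T2) y) ->
  [/\ essential_hyperplane g T1 H /\ essential_hyperplane g T2 H &
      exists Z1 Z2, [/\ halfspace_of g H Z1, halfspace_of g H Z2, Z1 <> Z2,
                        T1 `<=` Z1 & T2 `<=` Z2]].
Proof.
move=> Hhyp Hp pS; have [Xp pW] : X p /\ p \in W by move: Hp; rewrite H_W.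
have [a [e e_gt0 [a0 aW T12a _]]] := tiles_opposite_at_face Hp pS.
have [[_ [A1 T1A]] [_ [A2 T2A]]] := (tile_forms tess T1t, tile_forms tess T2t).
have Z1H := halfspace_of_form Hhyp dimW H_W a0 aW.
have na0 : - a != 0 by rewrite oppr_eq0.
have naW w : w \in W -> lfun (- a) w = 0 by move=> wW; rewrite lfunNl aW ?oppr0.
have Z2H := halfspace_of_form Hhyp dimW H_W na0 naW.
have T1Z1 : T1 `<=` X `&` [set y | 0 <= lfun a y].
  by move=> y T1y; split; [exact: polyhedral_sub_X T1A _ T1y | exact: (T12a y).1].
have T2Z2 : T2 `<=` X `&` [set y | 0 <= lfun (- a) y].
  move=> y T2y; split; first exact: polyhedral_sub_X T2A _ T2y.
  by rewrite /= lfunNl oppr_ge0; exact: (T12a y).2.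
split.
  split; [apply: essential_hyperplane_of_near Z1H T1Z1 Hp _ |
          apply: essential_hyperplane_of_near Z2H T2Z2 Hp _];
    by apply: filterS pS => y yS /yS [].
exists (X `&` [set y | 0 <= lfun a y]), (X `&` [set y | 0 <= lfun (- a) y]); split=> //.
have [y [Xy _ ay]] := exists_positive_near Xp a0 (aW _ pW) e_gt0.
move=> Z12; have : (X `&` [set y | 0 <= lfun (- a) y]) y by rewrite -Z12; split=> //; exact: ltW.
by move=> [_ /=]; rewrite lfunNl oppr_ge0 leNgt ay.
Qed.

Lemma face_relint_point x0 : gen_subspace g (T1 `&` T2) H -> (T1 `&` T2) x0 ->
  exists p, (T1 `&` T2) p /\ nbhs p (fun y => H y -> (T1 `&` T2) y).
Proof.
move=> genH Sx0; have [[_ [A1 T1A]] [_ [A2 T2A]]] := (tile_forms tess T1t, tile_forms tess T2t).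
exact: polyhedral_relint_point (polyhedral_formsI T1A T2A) genH H_W Sx0.
Qed.

Lemma face_is_side : gen_subspace g (T1 `&` T2) H -> codim g (T1 `&` T2) 1 ->
  (T1 `&` T2) !=set0 -> side g Tiles (T1 `&` T2).
Proof.
move=> genH cod Sne; split=> //; split=> //; split.
  exists [set T | T = T1 \/ T = T2]; split; first by exists T1; left.
  split; first by move=> T [->|->].
  apply/seteqP; split=> [y [T1y T2y] T [->|->] // | y yT].
  by split; apply: yT; [left | right].
move=> T Tt; have [->|TT1] := pselect (T = T1); first by left=> y [].
have [->|TT2] := pselect (T = T2); first by left=> y [].
by right; exact: relint_face_third.
Qed.

End Tiles.

Theorem lemma4p3 (R : realType) (g : geometry) (n : nat)
    (Tiles : set (set 'rV[R]_(n.+1))) (T1 T2 : set 'rV[R]_(n.+1))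
    (H : set 'rV[R]_(n.+1)) :
  partial_tessellation g Tiles -> locally_finite_tess g Tiles ->
  Tiles T1 -> Tiles T2 ->
  codim g (T1 `&` T2) 1 ->
  gen_subspace g (T1 `&` T2) H ->
  [/\ essential_hyperplane g T1 H /\ essential_hyperplane g T2 H,
      (exists Z1 Z2, [/\ halfspace_of g H Z1, halfspace_of g H Z2, Z1 <> Z2,
                         T1 `<=` Z1 & T2 `<=` Z2]),
      (forall T, Tiles T -> T <> T1 -> T <> T2 ->
                 relint g (T1 `&` T2) `&` T = set0)
    & side g Tiles (T1 `&` T2)].
Proof.
move=> tess _ T1t T2t cod genH; have [Y [genY codimY]] := cod.
rewrite (gen_subspace_uniq genY genH) in codimY; have [W [dimW [H_W Hne]]] := codimY.
have [x0 Sx0] := gen_hyperplane_nonempty dimW H_W Hne genH.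
have T12 : T1 <> T2.
  move=> T1T2; have [T1thick _] := tile_forms tess T1t.
  apply: (thick_not_sub_hyperplane dimW H_W T1thick).
  by rewrite -[T1]setIid {2}T1T2; case: genH => _ [].
have [p [Sp pS]] := face_relint_point tess T1t T2t H_W genH Sx0.
have [essH halves] := face_halfspaces tess T1t T2t T12 dimW H_W codimY (genH.2.1 _ Sp) pS.
split=> //; first exact: (relint_face_third tess T1t T2t T12 dimW H_W genH).
by apply: (face_is_side tess T1t T2t T12 dimW H_W genH cod); exists x0.
Qed.
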